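(* In the three-door Monty Hall game described in the context, let $Q$ be an arbitrary mixed strategy of Monte and $\theta\in\{1,2,3\}$. If Monte's pure strategy $(\theta,y)$ with $y=\min(\{1,2,3\}\setminus\{\theta\})$ has positive probability under $Q$, then Conie's pure strategy $\theta\,\mathrm{s}\,\mathrm{h}$ is not Bayesian for $Q$. If Monte's pure strategy $(\theta,y)$ with $y=\max(\{1,2,3\}\setminus\{\theta\})$ has positive probability under $Q$, then $\theta\,\mathrm{h}\,\mathrm{s}$ is not Bayesian for $Q$.
   Context: Doors are numbered $1,2,3$. A pure strategy of Monte is a pair $(\theta,d)$ with $\theta\in\{1,2,3\}$ (the door hiding the prize) and $d\in\{1,2,3\}\setminus\{\theta\}$ (six strategies). A pure strategy of Conie is a triple $x\,a\,b$ with $x\in\{1,2,3\}$ and $a,b\in\{\mathrm{h},\mathrm{s}\}$ (twelve strategies). Under the profile $((\theta,d),x\,a\,b)$: Monte offers door $y=\theta$ if $x\neq\theta$ and $y=d$ if $x=\theta$; Conie's action is $a$ if $y$ is the smaller of the two doors in $\{1,2,3\}\setminus\{x\}$ and $b$ otherwise; her final choice is $z=x$ for action $\mathrm{h}$ and $z=y$ for action $\mathrm{s}$; she wins (payoff 1) iff $z=\theta$, else payoff 0. A mixed strategy is a probability distribution on pure strategies. For a mixed strategy $Q$ of Monte, a pure strategy of Conie is Bayesian if it maximizes Conie's winning probability against $Q$ among all (pure or mixed) strategies of Conie. *)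

From HB Require Import structures.
From mathcomp Require Import all_boot all_order all_algebra.
Set Implicit Arguments. Unset Strict Implicit. Unset Printing Implicit Defensive.
Import Order.TTheory GRing.Theory Num.Theory.
Local Open Scope ring_scope.

(* Doors 1,2,3 are represented by i : 'I_3 with door number i+1. *)
Definition door := 'I_3.

Inductive action := hold | switch.
Definition action_eqb (a b : action) : bool :=
  match a, b with hold, hold | switch, switch => true | _, _ => false end.
Definition action_to_bool (a : action) : bool := if a is switch then true else false.
Definition bool_to_action (b : bool) : action := if b then switch else hold.
Lemma action_boolK : cancel action_to_bool bool_to_action. Proof. by case. Qed.
HB.instance Definition _ := Equality.copy action (can_type action_boolK).
HB.instance Definition _ := Finite.copy action (can_type action_boolK).

Definition monte_pure := {p : door * door | p.1 != p.2}.
Definition mtheta (m : monte_pure) : door := (val m).1.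
Definition md (m : monte_pure) : door := (val m).2.

Definition conie_pure := (door * action * action)%type.

Definition d1 : door := @Ordinal 3 0 isT.
Definition d2 : door := @Ordinal 3 1 isT.
Definition d3 : door := @Ordinal 3 2 isT.

(* The smaller / larger of the two doors in {1,2,3} \ {theta}. *)
Definition min_other (theta : door) : door := if theta == d1 then d2 else d1.
Definition max_other (theta : door) : door := if theta == d3 then d2 else d3.

Definition offered (m : monte_pure) (x : door) : door :=
  if x != mtheta m then mtheta m else md m.

Definition win (m : monte_pure) (c : conie_pure) : bool :=
  let: (x, a, b) := c in
  let y := offered m x in
  let act := if y == min_other x then a else b in
  let z := if act is hold then x else y in
  z == mtheta m.

Definition payoff {R : numDomainType} (m : monte_pure) (c : conie_pure) : R :=
  (win m c)%:R.

Definition is_mixed {R : numDomainType} {T : finType} (P : {ffun T -> R}) : Prop :=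
  (forall t, 0 <= P t) /\ \sum_t P t = 1.

Definition win_prob {R : numDomainType} (Q : {ffun monte_pure -> R})
  (P : {ffun conie_pure -> R}) : R :=
  \sum_m \sum_c Q m * P c * payoff m c.

Definition win_prob_pure {R : numDomainType} (Q : {ffun monte_pure -> R})
  (c : conie_pure) : R :=
  \sum_m Q m * payoff m c.

Definition bayesian {R : numDomainType} (Q : {ffun monte_pure -> R})
  (c : conie_pure) : Prop :=
  forall P : {ffun conie_pure -> R}, is_mixed P -> win_prob Q P <= win_prob_pure Q c.

Definition mk_monte (theta d : door) (h : theta != d) : monte_pure :=
  exist _ (theta, d) h.

(* The strategy θ s h wins exactly when the prize is behind min_other θ, or when
   it is behind θ and Monte offers max_other θ; in every case the prize is not
   behind max_other θ, so always switching from max_other θ wins at least as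
   often. Against (θ, min_other θ), where θ s h loses, always switching from
   max_other θ wins; a positive weight on that profile makes it strictly better,
   hence θ s h is not Bayesian. The case of θ h s is symmetric, with min_other θ
   and max_other θ exchanged. *)
From mathcomp Require Import all_boot all_order all_algebra.
Import Order.TTheory GRing.Theory Num.Theory.
Set Implicit Arguments. Unset Strict Implicit. Unset Printing Implicit Defensive.
Local Open Scope ring_scope.

Section Dominance.

Variable R : realFieldType.
Variable Q : {ffun monte_pure -> R}.

Definition pure_strategy (c : conie_pure) : {ffun conie_pure -> R} :=
  [ffun x => (x == c)%:R].

Lemma is_mixed_pure_strategy c : is_mixed (pure_strategy c).
Proof.
split=> [x|]; first by rewrite ffunE ler0n.
rewrite (bigD1 c) //= ffunE eqxx big1 ?addr0 // => x /negbTE nx.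
by rewrite ffunE nx.
Qed.

Lemma win_prob_pure_strategy c : win_prob Q (pure_strategy c) = win_prob_pure Q c.
Proof.
apply: eq_bigr => m _; rewrite (bigD1 c) //= ffunE eqxx mulr1 big1 ?addr0 //.
by move=> x /negbTE nx; rewrite ffunE nx mulr0 mul0r.
Qed.

Lemma win_prob_pure_lt (c c' : conie_pure) (m0 : monte_pure) :
  (forall m, 0 <= Q m) -> (forall m, win m c -> win m c') ->
  ~~ win m0 c -> win m0 c' -> 0 < Q m0 ->
  win_prob_pure Q c < win_prob_pure Q c'.
Proof.
move=> Q_ge0 dom lose0 win0 Qm0_gt0; rewrite /win_prob_pure /payoff.
rewrite (bigD1 m0) //= [X in _ < X](bigD1 m0) //= (negbTE lose0) win0.
rewrite mulr0 add0r mulr1 -[X in X < _]add0r ltr_leD //.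
apply: ler_sum => m _; apply: ler_wpM2l => //.
by case: (win m c) (dom m) => // ->.
Qed.

Lemma not_bayesian_dominated (c c' : conie_pure) (m0 : monte_pure) :
  is_mixed Q -> (forall m, win m c -> win m c') ->
  ~~ win m0 c -> win m0 c' -> 0 < Q m0 -> ~ bayesian Q c.
Proof.
move=> [Q_ge0 _] dom lose0 win0 Qm0_gt0 bayes_c.
have := bayes_c _ (is_mixed_pure_strategy c'); rewrite win_prob_pure_strategy.
by apply/negP; rewrite -ltNge; exact: win_prob_pure_lt dom lose0 win0 Qm0_gt0.
Qed.

End Dominance.

Arguments not_bayesian_dominated {R Q c c' m0}.

Lemma win_switch_switch (m : monte_pure) (x : door) :
  win m (x, switch, switch) = (mtheta m != x).
Proof.
case: m => [[th d] /= th_d]; rewrite /win /offered /mtheta /md /= if_same.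
by case: (eqVneq x th) => [_|_] /=; rewrite ?eqxx // eq_sym (negbTE th_d).
Qed.

Lemma neq_min_other (t : door) : t != min_other t.
Proof. by case: t => [[|[|[|]]] ?]. Qed.

Lemma neq_max_other (t : door) : t != max_other t.
Proof. by case: t => [[|[|[|]]] ?]. Qed.

Lemma win_switch_hold (m : monte_pure) (t : door) :
  win m (t, switch, hold) -> mtheta m != max_other t.
Proof.
case: m => [[th d] th_d]; rewrite /win /offered /mtheta /md /=.
by case: t => [[|[|[|?]]] ?]; case: th th_d => [[|[|[|?]]] ?];
  case: d => [[|[|[|?]]] ?].
Qed.

Lemma win_hold_switch (m : monte_pure) (t : door) :
  win m (t, hold, switch) -> mtheta m != min_other t.
Proof.
case: m => [[th d] th_d]; rewrite /win /offered /mtheta /md /=.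
by case: t => [[|[|[|?]]] ?]; case: th th_d => [[|[|[|?]]] ?];
  case: d => [[|[|[|?]]] ?].
Qed.

Lemma lose_switch_hold_min (t : door) (h : t != min_other t) :
  ~~ win (mk_monte h) (t, switch, hold).
Proof. by move: h; case: t => [[|[|[|]]] ?]. Qed.

Lemma lose_hold_switch_max (t : door) (h : t != max_other t) :
  ~~ win (mk_monte h) (t, hold, switch).
Proof. by move: h; case: t => [[|[|[|]]] ?]. Qed.

Theorem mainTheorem4 (R : realFieldType) (Q : {ffun monte_pure -> R})
  (theta : door) :
  is_mixed Q ->
  (forall h : theta != min_other theta,
     0 < Q (mk_monte h) -> ~ bayesian Q (theta, switch, hold)) /\
  (forall h : theta != max_other theta,
     0 < Q (mk_monte h) -> ~ bayesian Q (theta, hold, switch)).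
Proof.
move=> mixed_Q; split=> h Q_gt0.
- have dom m : win m (theta, switch, hold) -> win m (max_other theta, switch, switch).
    by move/win_switch_hold; rewrite win_switch_switch.
  apply: (not_bayesian_dominated mixed_Q dom (lose_switch_hold_min h) _ Q_gt0).
  by rewrite win_switch_switch neq_max_other.
- have dom m : win m (theta, hold, switch) -> win m (min_other theta, switch, switch).
    by move/win_hold_switch; rewrite win_switch_switch.
  apply: (not_bayesian_dominated mixed_Q dom (lose_hold_switch_max h) _ Q_gt0).
  by rewrite win_switch_switch neq_min_other.
Qed.
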